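(* Let $G$ be a strongly connected digraph with $n\geq 2$ vertices. (1) If $G$ contains an $m$-wheel for some $m\geq 1$, then $G$ admits a boolean nilpotent function of class at most $2n-m+1$. (2) If $G$ has a loop, then $G$ admits a boolean nilpotent function of class at most $2n-1$.
   Context: Digraphs may have loops but no multiple arcs. For $m\geq 1$, the $m$-wheel $W_m$ is the digraph obtained from a directed cycle $C_m$ of length $m$ (for $m=1$, a single vertex with a loop) by adding a new vertex $v$ (the center) and an arc from $v$ to every vertex of $C_m$; $G$ contains an $m$-wheel if some subgraph of $G$ is isomorphic to $W_m$. A boolean function on $[n]$ is a map $f:\{0,1\}^n\to\{0,1\}^n$; its (unsigned) interaction graph has an arc $(j,i)$ iff $f_i$ depends essentially on $x_j$, i.e. $f_i(a)\neq f_i(b)$ for some $a,b$ differing only in coordinate $j$. $G$ admits $f$ if the interaction graph of $f$ equals $G$. $f$ is nilpotent if $f^k$ is constant for some $k\geq 0$ ($f^0=\mathrm{id}$); the least such $k$ is its class. *)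

From mathcomp Require Import all_boot.
Set Implicit Arguments. Unset Strict Implicit. Unset Printing Implicit Defensive.

(* A digraph on vertex set [n] = 'I_n, loops allowed, no multiple arcs:
   G : rel 'I_n, with G u v meaning there is an arc (u,v). *)

Definition config (n : nat) := {ffun 'I_n -> bool}.

Definition bfun (n : nat) := config n -> config n.

Definition depends (n : nat) (f : bfun n) (j i : 'I_n) : Prop :=
  exists a b : config n,
    (forall l, l != j -> a l = b l) /\ f a i != f b i.

Definition admits (n : nat) (G : rel 'I_n) (f : bfun n) : Prop :=
  forall j i : 'I_n, G j i <-> depends f j i.

Definition strongly_connected (n : nat) (G : rel 'I_n) : Prop :=
  forall u v : 'I_n, connect G u v.

(* Cycle vertices c 0, ..., c (m-1) with arcs c k -> c (k+1 mod m)
   (a loop when m = 1), and a center v distinct from them with arcs v -> c k. *)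
Definition contains_wheel (n : nat) (G : rel 'I_n) (m : nat) : Prop :=
  exists (v : 'I_n) (c : 'I_m -> 'I_n),
    injective c /\ (forall k, c k != v) /\
    (forall k, G (c k) (c (ordS k))) /\ (forall k, G v (c k)).

Definition has_loop (n : nat) (G : rel 'I_n) : Prop := exists u, G u u.

Definition is_constant (n : nat) (g : bfun n) : Prop :=
  exists y : config n, forall x, g x = y.

(* f is nilpotent of class at most b: f^k constant for some k <= b
   (the least such k, the class, is then <= b). *)
Definition nilpotent_class_le (n : nat) (f : bfun n) (b : nat) : Prop :=
  exists k, k <= b /\ is_constant (iter k f).

From mathcomp Require Import all_boot zify.
Set Implicit Arguments. Unset Strict Implicit. Unset Printing Implicit Defensive.

(* Both functions are AND networks on G in which a single arc e carries a
   negated literal.  Such a network admits G; a zero propagates along every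
   arc other than e, and a one becomes a zero across e, so it is enough to
   choose e so that some set of vertices becomes and stays zero quickly and
   reaches every vertex by paths avoiding e.
   For an m-wheel with centre v, fix a path of length l <= n - m leaving the
   cycle at c j and ending at v, and let e be the spoke into the vertex l + 1
   steps after c j on the cycle.  A zero at c j reaches the whole cycle l + 1
   steps later (along the cycle for the head of e, through v and the other
   spokes for the rest), after which the cycle stays zero; c j is zero within
   m steps, and zeros then spread along paths of length at most n - m.
   For a loop at r, e enters a vertex of in-degree at least two and avoids
   an out-tree from r and one "exit arc" per such vertex towards r (there
   are more candidates than forbidden arcs); then r reaches everything and
   every vertex of in-degree at least two reaches r avoiding e, which makes
   r zero within n steps, and the loop keeps it zero. *)

Section Paths.
Variables (T : finType) (R : rel T).

Lemma connect_uniq_path a b :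
  connect R a b -> exists p, [/\ path R a p, last a p = b & uniq (a :: p)].
Proof. by case/connectP=> p /shortenP[p' ? ? _] ->; exists p'. Qed.

Lemma uniq_size_le_card (s : seq T) : uniq s -> size s <= #|T|.
Proof. by move/card_uniqP <-; apply: max_card. Qed.

Lemma path_connect_last a p :
  path R a p -> {in a :: p, forall y, connect R y (last a p)}.
Proof.
elim: p a => [|z p IHp] a /=; first by move=> _ y /[1!inE] /eqP->.
case/andP=> Raz pz y /predU1P[-> | /IHp-> //].
exact: connect_trans (connect1 Raz) (IHp _ pz _ (mem_head _ _)).
Qed.

Lemma uniq_size_outside (P : {pred T}) (s : seq T) :
  uniq s -> all [predC P] s -> size s <= #|T| - #|P|.
Proof.
move=> /card_uniqP <- /allP sP; rewrite -(cardC P) addKn.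
by apply/subset_leq_card/subsetP.
Qed.

Lemma path_suffix_outside (P : {pred T}) a p : a \in P -> path R a p ->
  exists a' p1 p2, [/\ a' \in P, path R a' p2, last a' p2 = last a p,
                      all [predC P] p2 & p = p1 ++ p2].
Proof.
move=> Pa; elim/last_ind: p => [|q y IHq]; first by exists a, [::], [::].
rewrite rcons_path last_rcons => /andP[/IHq[a' [p1 [p2 [Pa' p2R lp2 p2out Eq]]]] Ry].
have [Py | Py] := boolP (y \in P).
  by exists y, (rcons q y), [::]; rewrite cats0.
exists a', p1, (rcons p2 y).
by rewrite rcons_path lp2 Ry p2R last_rcons all_rcons /= Py p2out Eq rcons_cat.
Qed.

Lemma connect_from_set (P : {pred T}) a b : a \in P -> connect R a b ->
  exists a' p, [/\ a' \in P, path R a' p, last a' p = b,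
                  all [predC P] p & size p <= #|T| - #|P|].
Proof.
move=> Pa /connect_uniq_path[p [pR <- up]].
have [a' [p1 [p2 [Pa' p2R lp2 p2out Ep]]]] := path_suffix_outside Pa pR.
exists a', p2; split=> //; apply: uniq_size_outside p2out.
by move: up; rewrite Ep /= cat_uniq => /and4P[_ _ _].
Qed.

End Paths.

Section Distance.
Variables (T : finType) (R : rel T).

Definition reach_in k a b := [exists p : k.-tuple T, path R a p && (last a p == b)].

Lemma reach_inP k a b :
  reflect (exists p, [/\ size p = k, path R a p & last a p = b]) (reach_in k a b).
Proof.
apply: (iffP existsP) => [[p /andP[pR /eqP lp]] | [p [sp pR lp]]].
  by exists p; rewrite size_tuple.
by exists (tcast sp (in_tuple p)); rewrite val_tcast /= pR lp eqxx.
Qed.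

(* [gdist a b = #|T|] when b is not reachable from a. *)
Definition gdist a b := find (fun k => reach_in k a b) (iota 0 #|T|).

Lemma gdist_min k a b : reach_in k a b -> gdist a b <= k.
Proof.
move=> Rk; have [kT | Tk] := ltnP k #|T|.
  rewrite leqNgt; apply/negP => /(before_find 0).
  by rewrite nth_iota ?add0n // Rk.
by apply: leq_trans Tk; rewrite -[#|T|](size_iota 0) find_size.
Qed.

Lemma gdist_reach a b : connect R a b -> reach_in (gdist a b) a b.
Proof.
case/connect_uniq_path => p [pR lp up].
have pT : size p < #|T| := uniq_size_le_card up.
have Rp : reach_in (size p) a b by apply/reach_inP; exists p.
have hasR : has (fun k => reach_in k a b) (iota 0 #|T|).
  by apply/hasP; exists (size p); rewrite ?mem_iota.
have := nth_find 0 hasR; rewrite nth_iota ?add0n //.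
by move: hasR; rewrite has_find size_iota.
Qed.

Lemma gdist_succ a b : connect R a b -> a != b ->
  exists2 c, R a c & gdist c b < gdist a b.
Proof.
move/gdist_reach/reach_inP => [[|c p] [sp /= pR lp]]; first by rewrite lp eqxx.
case/andP: pR => Rac pR _; exists c => //; rewrite -sp ltnS.
by apply/gdist_min/reach_inP; exists p.
Qed.

Lemma gdist_pred a b : connect R a b -> a != b ->
  exists2 c, R c b & gdist a c < gdist a b.
Proof.
move/gdist_reach/reach_inP => [p [sp pR lp]].
case/lastP: p sp pR lp => [|p c] sp pR lp; first by rewrite -lp eqxx.
rewrite last_rcons in lp; subst c; move: pR; rewrite rcons_path => /andP[pR Rb] _.
exists (last a p) => //; rewrite -sp size_rcons ltnS.
by apply/gdist_min/reach_inP; exists p.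
Qed.

End Distance.

Definition relay (T : finType) (G : rel T) b := #|[set a | G a b]| == 1.

Lemma relay_in_unique (T : finType) (G : rel T) a b :
  relay G b -> G a b -> forall j, G j b = (j == a).
Proof.
move=> /cards1P[a0 Eb] Gab j.
have Gb y : G y b = (y == a0) by rewrite -in_set1 -Eb inE.
by rewrite Gb in Gab; rewrite Gb (eqP Gab).
Qed.

Section AndNetwork.
Variables (n : nat) (G : rel 'I_n) (e : 'I_n * 'I_n).

Definition good_arc : rel 'I_n := fun a b => G a b && ((a, b) != e).

Definition and_net : bfun n :=
  fun x => [ffun i => [forall j, G j i ==> (x j == ((j, i) != e))]].

Lemma and_net_admits : admits G and_net.
Proof.
move=> j i; split=> [Gji | [a [b [ab]]]].
  pose a : config n := [ffun k => (k, i) != e].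
  pose b : config n := [ffun k => (k == j) (+) ((k, i) != e)].
  exists a, b; split=> [l /negbTE lj | ]; first by rewrite !ffunE lj.
  rewrite !ffunE; have -> : [forall k, G k i ==> (a k == ((k, i) != e))].
    by apply/forallP => k; rewrite ffunE eqxx implybT.
  case: forallP => // /(_ j); rewrite Gji ffunE eqxx.
  by case: ((j, i) != e).
apply: contraNT => nGji; rewrite !ffunE; apply/eqP/eq_forallb => k.
by case: (eqVneq k j) => [-> | /ab ->]; rewrite ?(negbTE nGji).
Qed.

Lemma and_net_good_arc (x : config n) a b : good_arc a b -> x a = false -> and_net x b = false.
Proof.
case/andP=> Gab ab_e xa; rewrite ffunE.
by apply/negP => /forallP/(_ a); rewrite Gab xa ab_e.
Qed.

Lemma and_net_neg_arc (x : config n) a b : G a b -> (a, b) = e -> x a -> and_net x b = false.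
Proof.
move=> Gab ab_e xa; rewrite ffunE.
by apply/negP => /forallP/(_ a); rewrite Gab xa ab_e eqxx.
Qed.

Lemma and_net_relay (x : config n) a b : relay G b -> good_arc a b -> and_net x b = x a.
Proof.
move=> Rb /andP[Gab ab_e]; have Eb := relay_in_unique Rb Gab; rewrite ffunE.
apply/forallP/idP => [/(_ a) | xa k]; first by rewrite Gab ab_e => /eqP.
by rewrite Eb; apply/implyP => /eqP ->; rewrite xa ab_e.
Qed.

Lemma path_good_arc a p : path G a p -> e.2 \notin p -> path good_arc a p.
Proof.
elim: p a => //= y p IHp a /andP[Gay pG]; rewrite inE negb_or => /andP[ye pe].
by rewrite IHp // andbT /good_arc Gay; apply: contra ye => /eqP <-.
Qed.

Section Trajectory.
Variable x : config n.
Local Notation Z t := (iter t and_net x).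

Lemma and_net_path_zero a p t :
  path good_arc a p -> Z t a = false -> Z (t + size p) (last a p) = false.
Proof.
elim: p a t => [|y p IHp] a t /=; first by rewrite addn0.
by case/andP=> ay py Za; rewrite -addSnnS IHp //; apply: and_net_good_arc ay Za.
Qed.

Lemma and_net_path_relay a p t : path good_arc a p -> all (relay G) p ->
  Z (t + size p) (last a p) = Z t a.
Proof.
elim: p a t => [|y p IHp] a t /=; first by rewrite addn0.
by case/andP=> ay py /andP[Ry Rp]; rewrite -addSnnS IHp //= (and_net_relay _ Ry ay).
Qed.

Lemma and_net_extinct (S : {pred 'I_n}) T L :
  (forall t a, T <= t -> a \in S -> Z t a = false) ->
  (forall b, exists a p, [/\ a \in S, path good_arc a p, last a p = b & size p <= L]) ->
  Z (T + L) = [ffun => false].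
Proof.
move=> ZS reachS; apply/ffunP => b; rewrite ffunE.
have [a [p [Sa pg <- sp]]] := reachS b.
rewrite -(subnK sp) addnA; apply: and_net_path_zero => //.
by apply: ZS Sa; rewrite leq_addr.
Qed.

End Trajectory.
End AndNetwork.

Lemma iter_ordS_val m (a : 'I_m) i : val (iter i (@ordS m) a) = (a + i) %% m.
Proof.
elim: i => [|i IHi] /=; first by rewrite addn0 modn_small.
by rewrite IHi -addn1 modnDml -addnA addn1.
Qed.

Lemma iter_ordS_onto m (a b : 'I_m) : exists2 i, i < m & iter i (@ordS m) a = b.
Proof.
have m_gt0 : 0 < m by case: m a {b} => [[]|].
exists ((b + m - a) %% m); first by rewrite ltn_mod.
apply/val_inj; rewrite iter_ordS_val modnDmr.
have -> : a + (b + m - a) = b + m by have := ltn_ord a; lia.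
by rewrite modnDr modn_small.
Qed.

Lemma ordS_neq m (k : 'I_m) : 1 < m -> ordS k != k.
Proof.
move=> m_gt1; apply/eqP => /(congr1 val) /=; have := ltn_ord k.
case: (ltngtP k.+1 m) => [lt_km | // | Em] lt_k; first by rewrite modn_small //; lia.
by rewrite Em modnn; lia.
Qed.

Section Wheel.
Variables (n m : nat) (G : rel 'I_n) (v : 'I_n) (c : 'I_m -> 'I_n).
Hypotheses (c_inj : injective c) (c_neq_v : forall k, c k != v).
Hypotheses (cycle_arc : forall k, G (c k) (c (ordS k))) (spoke : forall k, G v (c k)).

Section WheelDynamics.
Variables (b : 'I_m) (x : config n).
Local Notation e := (v, c b).
Local Notation Z t := (iter t (and_net G e) x).

Lemma wheel_cycle_zero t k : Z t (c k) = false -> Z t.+1 (c (ordS k)) = false.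
Proof.
apply: and_net_good_arc; rewrite /good_arc cycle_arc /=.
by apply: contra (c_neq_v k) => /eqP[->].
Qed.

Lemma wheel_cycle_zero_iter t i k :
  Z t (c k) = false -> Z (t + i) (c (iter i (@ordS m) k)) = false.
Proof.
elim: i => [|i IHi] Zk; first by rewrite addn0.
by rewrite addnS; apply/wheel_cycle_zero/IHi.
Qed.

Lemma wheel_spoke_zero t k : k != b -> Z t v = false -> Z t.+1 (c k) = false.
Proof.
move=> kb; apply: and_net_good_arc; rewrite /good_arc spoke /=.
by apply: contra kb => /eqP[/c_inj ->].
Qed.

Lemma wheel_cycle_persist T : (forall k, Z T (c k) = false) ->
  forall t k, T <= t -> Z t (c k) = false.
Proof.
move=> ZT t k /subnK <-; elim: (t - T) k => [|d IHd] k //.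
by rewrite addSn -(ord_predK k); apply: wheel_cycle_zero.
Qed.

(* Once the zero of c j reaches v, every spoke except the negated one carries
   it to the cycle, and the zero travelling around the cycle covers c b. *)
Lemma wheel_cycle_vanish j p s :
  path (good_arc G e) (c j) p -> last (c j) p = v ->
  b = iter (size p).+1 (@ordS m) j -> Z s (c j) = false ->
  forall k, Z (s + size p).+1 (c k) = false.
Proof.
move=> pg lp Eb Zj k; have [-> | kb] := eqVneq k b.
  by rewrite -addnS; move: (wheel_cycle_zero_iter (size p).+1 Zj); rewrite -Eb.
by apply: wheel_spoke_zero kb _; move: (and_net_path_zero pg Zj); rewrite lp.
Qed.

Lemma wheel_first_zero j : 1 < m -> exists2 s, s <= m & Z s (c j) = false.
Proof.
move=> m_gt1; case Zv: (Z 0 v).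
  have Zb : Z 1 (c b) = false by apply: and_net_neg_arc Zv.
  have [i im <-] := iter_ordS_onto b j.
  by exists (1 + i); [rewrite add1n | apply: wheel_cycle_zero_iter].
have [-> | jb] := eqVneq j b; last by exists 1; [lia | apply: wheel_spoke_zero].
exists 2 => //; have := @wheel_cycle_zero 1 (ord_pred b); rewrite ord_predK; apply.
by apply: wheel_spoke_zero Zv; rewrite -{2}(ord_predK b) eq_sym ordS_neq.
Qed.

End WheelDynamics.

Lemma wheel_nilpotent : 1 < m -> strongly_connected G ->
  exists f : bfun n, admits G f /\ nilpotent_class_le f (2 * n - m + 1).
Proof.
move=> m_gt1 SC; pose P : {pred 'I_n} := [pred y | y \in codom c].
have cardP : #|P| = m by rewrite -[RHS]card_ord -(card_codom c_inj); apply: eq_card.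
have m_le_n : m <= n by rewrite -cardP; apply: leq_trans (max_card _) _; rewrite card_ord.
pose k0 : 'I_m := Ordinal (ltnW m_gt1).
have Pc k : c k \in P by rewrite inE codom_f.
have P'v : v \notin P by apply/codomP => -[k /eqP]; rewrite eq_sym (negbTE (c_neq_v k)).
have [_ [p0 [/codomP[j0 ->] p0G lp0 p0out sp0]]] := connect_from_set (Pc k0) (SC (c k0) v).
pose b := iter (size p0).+1 (@ordS m) j0; pose e := (v, c b).
have goodP a p : path G a p -> all [predC P] p -> path (good_arc G e) a p.
  move=> pG pout; apply: path_good_arc pG _; apply: contraL (Pc b) => /(allP pout).
  by rewrite inE.
exists (and_net G e); split; first exact: and_net_admits.
exists ((m + size p0).+1 + (n - m)); split; first by rewrite card_ord cardP in sp0; lia.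
exists [ffun=> false] => x; apply: (and_net_extinct (S := P)) => [t a Tt /codomP[k ->] | w].
  have [s sm Zs] := wheel_first_zero b x j0 m_gt1.
  apply: wheel_cycle_persist (wheel_cycle_vanish (goodP _ _ p0G p0out) lp0 _ Zs) _ _ _ => //.
  by apply: leq_trans Tt; rewrite ltnS leq_add2r.
have [a [p [Pa pG lp pout sp]]] := connect_from_set (Pc k0) (SC (c k0) w).
by exists a, p; rewrite card_ord cardP in sp; split => //; apply: goodP.
Qed.

End Wheel.

Lemma card_arcs_into (T : finType) (G : rel T) (B : {pred T}) :
  #|[set p : T * T | G p.1 p.2 && (p.2 \in B)]| = \sum_(b in B) #|[set a | G a b]|.
Proof.
under eq_bigr do rewrite -sum1_card.
rewrite (exchange_big_dep xpredT) //= pair_big_dep /= -sum1_card.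
by apply: eq_bigl => -[a b]; rewrite !inE andbC.
Qed.

Section Loop.
Variables (n : nat) (G : rel 'I_n) (r : 'I_n).
Hypotheses (n_gt1 : 1 < n) (SC : strongly_connected G) (loop_r : G r r).

Lemma in_neighbour_neq b : exists2 a, G a b & a != b.
Proof.
have [c cb] : exists c : 'I_n, c != b.
  have [<- | ne0] := eqVneq (Ordinal (ltnW n_gt1)) b; last by eexists; apply: ne0.
  by exists (Ordinal n_gt1).
have [a Gab lt_ab] := gdist_pred (SC c b) cb.
by exists a => //; apply: contraTneq lt_ab => ->; rewrite ltnn.
Qed.

Lemma nonrelay_in_gt1 b : ~~ relay G b -> 1 < #|[set a | G a b]|.
Proof.
have [a Gab _] := in_neighbour_neq b; rewrite /relay ltn_neqAle eq_sym => -> /=.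
by apply/card_gt0P; exists a; rewrite inE.
Qed.

Lemma root_nonrelay : ~~ relay G r.
Proof.
have [a Gar ar] := in_neighbour_neq r.
by apply/negP => /relay_in_unique /(_ loop_r a); rewrite Gar (negbTE ar).
Qed.

Lemma good_arc_relay e a b : ~~ relay G e.2 -> G a b -> relay G b -> good_arc G e a b.
Proof. by move=> Re Gab Rb; rewrite /good_arc Gab; apply: contraNneq Re => <-. Qed.

Definition tree_parent b := odflt b [pick a | G a b && (gdist G r a < gdist G r b)].

Lemma tree_parentP b : b != r ->
  G (tree_parent b) b /\ gdist G r (tree_parent b) < gdist G r b.
Proof.
rewrite eq_sym => rb; rewrite /tree_parent; case: pickP => [a /andP[] // | none].
by have [a Gab lt_ab] := gdist_pred (SC r b) rb; move: (none a); rewrite Gab lt_ab.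
Qed.

Definition relay_arc : rel 'I_n := fun a b => G a b && relay G b.

(* Exit arcs replace an in-tree towards r: the negated arc enters a non-relay
   vertex, so on the relay chain from x only the last arc can be it. *)
Definition is_exit_arc x (p : 'I_n * 'I_n) :=
  [&& G p.1 p.2, ~~ relay G p.2, gdist G p.2 r < gdist G x r & connect relay_arc x p.1].

Definition exit_arc x := odflt (x, x) [pick p | is_exit_arc x p].

Lemma exists_exit_arc x : x != r -> exists p, is_exit_arc x p.
Proof.
have [k] := ubnP (gdist G x r); elim: k x => // k IHk x lt_xk xr.
have [c Gxc lt_cx] := gdist_succ (SC x r) xr.
have [Rc | R'c] := boolP (relay G c); last first.
  by exists (x, c); rewrite /is_exit_arc /= Gxc R'c lt_cx connect0.
have cr : c != r by apply: contraTneq Rc => ->; apply: root_nonrelay.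
have [[a y] /and4P[/= Gay R'y lt_yc ca]] := IHk c (leq_trans lt_cx lt_xk) cr.
exists (a, y); rewrite /is_exit_arc /= Gay R'y (ltn_trans lt_yc lt_cx).
by rewrite (connect_trans (connect1 _) ca) // /relay_arc Gxc.
Qed.

Lemma exit_arcP x : x != r -> is_exit_arc x (exit_arc x).
Proof.
move=> /exists_exit_arc[p xp]; rewrite /exit_arc.
by case: pickP => // /(_ p); rewrite xp.
Qed.

Section GoodArc.
Variable e : 'I_n * 'I_n.
Hypothesis nonrelay_head : ~~ relay G e.2.

Lemma tree_good_connect :
  (forall b, ~~ relay G b -> b != r -> (tree_parent b, b) != e) ->
  forall b, connect (good_arc G e) r b.
Proof.
move=> He b; have [k] := ubnP (gdist G r b); elim: k b => // k IHk b lt_bk.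
have [-> | br] := eqVneq b r; first exact: connect0.
have [Gab lt_ab] := tree_parentP br.
apply: connect_trans (IHk _ (leq_trans lt_ab lt_bk)) (connect1 _).
have [Rb | R'b] := boolP (relay G b); first exact: good_arc_relay.
by rewrite /good_arc Gab He.
Qed.

Lemma exit_good_connect :
  (forall x, ~~ relay G x -> x != r -> exit_arc x != e) ->
  forall x, ~~ relay G x -> connect (good_arc G e) x r.
Proof.
move=> He x; have [k] := ubnP (gdist G x r); elim: k x => // k IHk x lt_xk R'x.
have [-> | xr] := eqVneq x r; first exact: connect0.
have := exit_arcP xr; have := He x R'x xr; case: (exit_arc x) => a y ay_e.
case/and4P=> /= Gay R'y lt_yx xa.
apply: connect_trans (IHk _ (leq_trans lt_yx lt_xk) R'y).
apply: connect_trans (connect1 (_ : good_arc G e a y)); last by rewrite /good_arc Gay.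
by apply: connect_sub xa => u v /andP[Guv Rv]; apply/connect1/good_arc_relay.
Qed.

End GoodArc.

(* The arcs into non-relay vertices number at least 2 |NR|, while the loop,
   the tree arcs into NR \ r and the exit arcs of NR \ r number at most
   2 |NR| - 1. *)
Lemma exists_free_arc : exists e : 'I_n * 'I_n,
  [/\ G e.1 e.2, ~~ relay G e.2, e != (r, r),
      forall b, ~~ relay G b -> b != r -> (tree_parent b, b) != e
    & forall x, ~~ relay G x -> x != r -> exit_arc x != e].
Proof.
pose NR := [set b | ~~ relay G b]; pose D := NR :\ r.
pose A := [set p | G p.1 p.2 && (p.2 \in NR)].
pose U := (r, r) |: ([set (tree_parent b, b) | b in D] :|: [set exit_arc x | x in D]).
have NRr : r \in NR by rewrite inE root_nonrelay.
have cardD : #|D| = #|NR| - 1 by rewrite (cardsD1 r NR) NRr addKn.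
have cardU : #|U| <= 1 + (#|D| + #|D|).
  rewrite cardsU1; apply: leq_add; first by case: (_ \notin _).
  by apply: leq_trans (leq_card_setU _ _) _; rewrite leq_add ?leq_imset_card.
have cardA : 2 * #|NR| <= #|A|.
  rewrite card_arcs_into mulnC -sum_nat_const; apply: leq_sum => b.
  by rewrite inE; apply: nonrelay_in_gt1.
have NR_gt0 : 0 < #|NR| by apply/card_gt0P; exists r.
have /subsetPn[e] : ~~ (A \subset U).
  by apply: contraTN cardA => /subset_leq_card AU; rewrite -ltnNge; lia.
rewrite !inE negb_or => /andP[Ge R'e] /andP[er U'e].
exists e; split => // [b R'b br | x R'x xr]; apply: contra U'e => /eqP <-.
  by rewrite orbC; apply/orP; right; apply: imset_f; rewrite !inE br.
by apply/orP; right; apply: imset_f; rewrite !inE xr.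
Qed.

Section LoopDynamics.
Variables (e : 'I_n * 'I_n) (x : config n).
Hypotheses (arc_e : G e.1 e.2) (nonrelay_head : ~~ relay G e.2) (e_neq_loop : e != (r, r)).
Hypotheses (from_root : forall b, connect (good_arc G e) r b).
Hypotheses (to_root : forall y, ~~ relay G y -> connect (good_arc G e) y r).
Local Notation Z t := (iter t (and_net G e) x).

(* Follow a good path from r to the tail of e, from its last vertex s that
   still reaches r; after s only relay vertices occur, so they copy x s.
   If x s is false it flows from s to r, otherwise the negated arc turns it
   into a zero at the head of e, which then flows to r. *)
Lemma loop_root_zero : exists2 T, T <= n & Z T r = false.
Proof.
pose Reach : {pred 'I_n} := [pred y | connect (good_arc G e) y r].
have [q [qg lq uq]] := connect_uniq_path (from_root e.1).
have Rr : r \in Reach by rewrite inE connect0.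
have [s [p1 [p [Rs pg lp p'R Eq]]]] := path_suffix_outside Rr qg.
rewrite lq in lp; move: uq; rewrite Eq /= cat_uniq => /and4P[_ _ _ up].
have Rp : all (relay G) p.
  by apply/allP => y /(allP p'R); apply: contraR => /to_root; rewrite inE.
have [Zs | Z's] := boolP (Z 0 s); last first.
  have [ps [psg lps ups]] := connect_uniq_path Rs.
  exists (size ps); first by have := uniq_size_le_card ups; rewrite card_ord => /ltnW.
  by rewrite -lps -[size ps]add0n; apply: and_net_path_zero => //; apply: negbTE.
have Zu : Z (size p) e.1 by rewrite -lp -[size p]add0n and_net_path_relay.
have Zw : Z (size p).+1 e.2 = false.
  by apply: and_net_neg_arc arc_e _ Zu; rewrite -surjective_pairing.
have [pw [pwg lpw upw]] := connect_uniq_path (to_root nonrelay_head).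
exists ((size p).+1 + size pw); last by rewrite -lpw; apply: and_net_path_zero.
have : uniq (p ++ e.2 :: pw).
  rewrite cat_uniq up upw andbT; apply/hasPn => y /(path_connect_last pwg).
  by rewrite lpw => Ry; apply: contraL Ry => /(allP p'R).
by move/uniq_size_le_card; rewrite card_ord size_cat /= addnS.
Qed.

Lemma loop_root_persist T : Z T r = false -> forall t, T <= t -> Z t r = false.
Proof.
move=> ZT t /subnK <-; elim: (t - T) => // d IHd; rewrite addSn.
by apply: and_net_good_arc IHd; rewrite /good_arc loop_r eq_sym.
Qed.

End LoopDynamics.

Lemma loop_nilpotent :
  exists f : bfun n, admits G f /\ nilpotent_class_le f (2 * n - 1).
Proof.
have [e [arc_e R'e er He1 He2]] := exists_free_arc.
have from_root := tree_good_connect R'e He1.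
have to_root := exit_good_connect R'e He2.
exists (and_net G e); split; first exact: and_net_admits.
exists (n + (n - 1)); split; first lia.
exists [ffun=> false] => x; have [T le_Tn ZT] := loop_root_zero x arc_e R'e from_root to_root.
apply: (and_net_extinct (S := pred1 r)) => [t a le_nt /eqP-> | b].
  by apply: loop_root_persist ZT _ (leq_trans le_Tn le_nt).
have [p [pg lp up]] := connect_uniq_path (from_root b).
exists r, p; split; rewrite ?inE //; have := uniq_size_le_card up; rewrite card_ord /=; lia.
Qed.

End Loop.

Theorem theorem4 (n : nat) (G : rel 'I_n) :
  2 <= n -> strongly_connected G ->
  (forall m, 1 <= m -> contains_wheel G m ->
     exists f : bfun n, admits G f /\ nilpotent_class_le f (2 * n - m + 1)) /\
  (has_loop G ->
     exists f : bfun n, admits G f /\ nilpotent_class_le f (2 * n - 1)).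
Proof.
move=> n_gt1 SC; split=> [m m_gt0 [v [c [c_inj [c_neq_v [cycle_arc spoke]]]]] | [r loop_r]].
  have [m_gt1 | m_le1] := ltnP 1 m.
    exact: (wheel_nilpotent c_inj c_neq_v cycle_arc spoke m_gt1 SC).
  have m1 : m = 1 by apply/eqP; rewrite eqn_leq m_le1.
  subst m; have loop_c : G (c ord0) (c ord0) by have := cycle_arc ord0; rewrite [ordS _]ord1.
  have [f [admits_f [k [le_k k_const]]]] := loop_nilpotent n_gt1 SC loop_c.
  by exists f; split => //; exists k; split => //; lia.
exact: loop_nilpotent n_gt1 SC loop_r.
Qed.
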